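(* The function $y\mapsto h(e^{y})$ is concave on the interval $(-\infty,\ln(1/2)]$.
   Context: $h(t)=(1-t)\left[\psi-\left(\frac{t}{1-t}\right)^{\chi}\right]$ for $t\in[0,1/2]$, with $\psi=13/10$ and $\chi=1/2$. *)

From Stdlib Require Import Reals.
Open Scope R_scope.

Definition psi : R := 13 / 10.
Definition chi : R := 1 / 2.

Definition h (t : R) : R := (1 - t) * (psi - Rpower (t / (1 - t)) chi).

Definition concave_on (I : R -> Prop) (f : R -> R) : Prop :=
  forall x y a, I x -> I y -> 0 <= a <= 1 ->
    a * f x + (1 - a) * f y <= f (a * x + (1 - a) * y).

(** With [t = e^y] and [w = sqrt (t / (1 - t))], so that [t = w^2 / (1 + w^2)],
    the derivative of [y |-> h (e^y)] is [- neg_slope w] for a rational function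
    [neg_slope]. On [y <= ln (1/2)] we have [0 <= w <= 1]; there [w] increases with
    [y] and [neg_slope] is increasing (this is where [psi >= 1] is used), so the derivative is
    nonincreasing and the mean value theorem gives concavity. *)

From Stdlib Require Import Reals Lra Psatz.
From Coquelicot Require Import Coquelicot.
Open Scope R_scope.

Lemma concave_on_of_derive_antitone (I : R -> Prop) (f f' : R -> R) :
  (forall x y z, I x -> I z -> x <= y <= z -> I y) ->
  (forall x, I x -> derivable_pt_lim f x (f' x)) ->
  (forall x y, I x -> I y -> x <= y -> f' y <= f' x) ->
  concave_on I f.
Proof.
intros I_convex f_der f'_anti.
assert (chord : forall x y a, I x -> I y -> x < y -> 0 < a < 1 ->
          a * f x + (1 - a) * f y <= f (a * x + (1 - a) * y)).
{ intros x y a Ix Iy Hxy Ha.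
  set (z := a * x + (1 - a) * y).
  assert (Hxz : x < z) by (unfold z; nra).
  assert (Hzy : z < y) by (unfold z; nra).
  assert (I_between : forall c, x <= c <= y -> I c) by eauto.
  destruct (MVT_cor2 f f' x z Hxz) as [c1 [E1 Hc1]].
  { intros c Hc; apply f_der, I_between; lra. }
  destruct (MVT_cor2 f f' z y Hzy) as [c2 [E2 Hc2]].
  { intros c Hc; apply f_der, I_between; lra. }
  assert (f' c2 <= f' c1) by (apply f'_anti; try apply I_between; lra).
  replace (z - x) with ((1 - a) * (y - x)) in E1 by (unfold z; ring).
  replace (y - z) with (a * (y - x)) in E2 by (unfold z; ring).
  assert (0 <= a * (1 - a) * (y - x)) by (apply Rmult_le_pos; nra).
  nra. }
intros x y a Ix Iy Ha.
destruct (Req_dec a 0) as [->|Ha0].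
{ replace (0 * x + (1 - 0) * y) with y by ring; lra. }
destruct (Req_dec a 1) as [->|Ha1].
{ replace (1 * x + (1 - 1) * y) with x by ring; lra. }
destruct (Rtotal_order x y) as [Hxy|[<- | Hyx]].
- apply chord; auto; lra.
- replace (a * x + (1 - a) * x) with x by ring; lra.
- replace (a * x + (1 - a) * y) with ((1 - a) * y + (1 - (1 - a)) * x) by ring.
  pose proof (chord y x (1 - a) Iy Ix Hyx ltac:(lra)); lra.
Qed.

Definition odds_root (y : R) : R := Rpower (exp y / (1 - exp y)) chi.

Definition neg_slope (w : R) : R := (2 * psi * w ^ 2 + w - w ^ 3) / (2 * (1 + w ^ 2)).

Lemma exp_lt_1 y : y < 0 -> exp y < 1.
Proof. intros Hy; rewrite <- exp_0; apply exp_increasing, Hy. Qed.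

Lemma exp_le_half y : y <= ln (1 / 2) -> exp y <= 1 / 2.
Proof.
intros [Hy | ->].
- rewrite <- (exp_ln (1 / 2)) by lra; left; apply exp_increasing, Hy.
- rewrite exp_ln by lra; lra.
Qed.

Lemma ln_half_neg : ln (1 / 2) < 0.
Proof. rewrite <- ln_1; apply ln_increasing; lra. Qed.

Lemma odds_root_sqrt y : y < 0 -> odds_root y = sqrt (exp y / (1 - exp y)).
Proof.
intros Hy; pose proof (exp_lt_1 y Hy); pose proof (exp_pos y).
unfold odds_root, chi; rewrite <- Rpower_sqrt by (apply Rdiv_lt_0_compat; lra).
f_equal; field.
Qed.

Lemma exp_odds_root y : y < 0 -> exp y = odds_root y ^ 2 / (1 + odds_root y ^ 2).
Proof.
intros Hy; pose proof (exp_lt_1 y Hy); pose proof (exp_pos y).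
rewrite odds_root_sqrt, pow2_sqrt by (auto; left; apply Rdiv_lt_0_compat; lra).
replace (1 + exp y / (1 - exp y)) with (/ (1 - exp y)) by (field; lra).
field; lra.
Qed.

Lemma derivable_h_exp y : y < 0 ->
  derivable_pt_lim (fun y => h (exp y)) y (- neg_slope (odds_root y)).
Proof.
intros Hy; pose proof (exp_lt_1 y Hy); pose proof (exp_pos y).
apply is_derive_Reals.
assert (Hder : is_derive (fun y => h (exp y)) y
          (- exp y * psi + exp y * odds_root y - odds_root y / 2)).
{ unfold h, odds_root, Rpower; auto_derive.
  - repeat split; try lra; apply Rdiv_lt_0_compat; lra.
  - unfold Rdiv, Rminus; set (E := exp (chi * _)); unfold chi; field; lra. }
replace (- neg_slope (odds_root y))
  with (- exp y * psi + exp y * odds_root y - odds_root y / 2); [exact Hder|].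
rewrite (exp_odds_root y Hy); unfold neg_slope; field; nra.
Qed.

Lemma neg_slope_le a b : 0 <= a -> a <= b -> b <= 1 -> neg_slope a <= neg_slope b.
Proof.
intros Ha Hab Hb.
assert (E : neg_slope b - neg_slope a =
  (b - a) * (2 * psi * (a + b) + 1 - a * b - (a * a + a * b + b * b) - a * a * b * b)
    / (2 * (1 + a ^ 2) * (1 + b ^ 2))) by (unfold neg_slope; field; nra).
assert (0 <= (b - a) * (2 * psi * (a + b) + 1 - a * b - (a * a + a * b + b * b)
                        - a * a * b * b)).
{ apply Rmult_le_pos; [lra|]; unfold psi.
  assert (a * b <= b) by nra; assert (a * a <= a) by nra.
  assert (b * b <= b) by nra; assert (a * a * b * b <= 1) by nra; nra. }
assert (0 <= (b - a) * (2 * psi * (a + b) + 1 - a * b - (a * a + a * b + b * b)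
                        - a * a * b * b) / (2 * (1 + a ^ 2) * (1 + b ^ 2)))
  by (apply Rdiv_le_0_compat; nra).
lra.
Qed.

Lemma odds_le t1 t2 : t1 <= t2 -> t2 < 1 -> t1 / (1 - t1) <= t2 / (1 - t2).
Proof.
intros H12 H2; apply (Rmult_le_reg_r ((1 - t1) * (1 - t2))); [nra|].
field_simplify; lra.
Qed.

Lemma odds_root_le y1 y2 : y1 <= y2 -> y2 < 0 -> odds_root y1 <= odds_root y2.
Proof.
intros H12 H2.
rewrite !odds_root_sqrt by lra; apply sqrt_le_1_alt, odds_le; [|apply exp_lt_1, H2].
destruct H12 as [H12 | ->]; [left; apply exp_increasing, H12|lra].
Qed.

Lemma odds_root_le_1 y : y <= ln (1 / 2) -> odds_root y <= 1.
Proof.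
intros Hy; pose proof (exp_le_half y Hy); pose proof ln_half_neg.
rewrite odds_root_sqrt by lra; apply Rle_trans with (sqrt 1); [|rewrite sqrt_1; lra].
apply sqrt_le_1_alt, Rle_trans with ((1 / 2) / (1 - 1 / 2)); [apply odds_le | ]; lra.
Qed.

Theorem lemma45 :
  concave_on (fun y => y <= ln (1 / 2)) (fun y => h (exp y)).
Proof.
pose proof ln_half_neg.
apply concave_on_of_derive_antitone with (f' := fun y => - neg_slope (odds_root y)).
- intros x y z _ Hz Hy; lra.
- intros y Hy; apply derivable_h_exp; lra.
- intros y1 y2 _ H2 H12; apply Ropp_le_contravar, neg_slope_le.
  + unfold odds_root, Rpower; left; apply exp_pos.
  + apply odds_root_le; lra.
  + apply odds_root_le_1, H2.
Qed.
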